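(* Let $\{\triangleright\}\subseteq\sigma\subseteq\{\triangleright,\wedge,\mathrm{upd},\sqcup\}$ and let $\mathcal{A}$ be a $\sigma$-algebra. Then $\mathcal{A}$ has a meet-complete representation by partial functions if and only if $\mathcal{A}$ is representable by partial functions and its atoms are separating.
   Context: The operations are interpreted on partial functions as: $f \triangleright g = \{(x,y) \in g : x \notin \mathrm{dom}(f)\}$; $f\wedge g = f\cap g$; $\mathrm{upd}(f,g)(x)$ is $f(x)$ if $f(x)$ defined and $g(x)$ undefined, $g(x)$ if both defined, undefined otherwise; $(f\sqcup g)(x)$ is $f(x)$ if defined, else $g(x)$. A representation by partial functions is an isomorphism onto an algebra of partial functions with these operations. Define $0 := a\triangleright a$, $a\lhd b := (a\triangleright b)\triangleright b$, $a \le b :\iff a\lhd b = a$; for representable algebras this is a partial order with least element $0$ and $a\le b\iff\theta(a)\subseteq\theta(b)$. An atom is a minimal nonzero element; atoms are separating if whenever $a\not\le b$ there is an atom $c\le a$ with $c\not\le b$. A representation $\theta$ is meet complete if $\theta(\bigwedge S)=\bigcap\theta[S]$ for every nonempty $S$ whose meet exists in $(\mathcal{A},\le)$. *)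

(* A sigma-algebra: the operation [rst] (a |> b) is always present;
   each of meet (/\), upd, join (the "override" \sqcup) is in sigma iff the
   corresponding field is [Some _]. *)
Record sigma_alg := {
  carrier :> Type;
  rst : carrier -> carrier -> carrier;
  omeet : option (carrier -> carrier -> carrier);
  oupd : option (carrier -> carrier -> carrier);
  ojoin : option (carrier -> carrier -> carrier)
}.

Definition pfun (X : Type) := X -> option X.

Definition pf_rst {X} (f g : pfun X) : pfun X :=
  fun x => match f x with Some _ => None | None => g x end.

Definition pf_is_meet {X} (f g h : pfun X) : Prop :=
  forall x y, h x = Some y <-> (f x = Some y /\ g x = Some y).

Definition pf_upd {X} (f g : pfun X) : pfun X :=
  fun x => match f x, g x with
           | Some y, None => Some y
           | Some _, Some z => Some z
           | None, _ => None
           end.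

Definition pf_join {X} (f g : pfun X) : pfun X :=
  fun x => match f x with Some y => Some y | None => g x end.

Definition pf_eq {X} (f g : pfun X) : Prop := forall x, f x = g x.

Definition is_rep (A : sigma_alg) (X : Type) (theta : A -> pfun X) : Prop :=
  (forall a b : A, pf_eq (theta a) (theta b) -> a = b) /\
  (forall a b : A, pf_eq (theta (rst A a b)) (pf_rst (theta a) (theta b))) /\
  (forall m, omeet A = Some m ->
     forall a b : A, pf_is_meet (theta a) (theta b) (theta (m a b))) /\
  (forall u, oupd A = Some u ->
     forall a b : A, pf_eq (theta (u a b)) (pf_upd (theta a) (theta b))) /\
  (forall j, ojoin A = Some j ->
     forall a b : A, pf_eq (theta (j a b)) (pf_join (theta a) (theta b))).

Definition representable (A : sigma_alg) : Prop :=
  exists (X : Type) (theta : A -> pfun X), is_rep A X theta.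

Definition ale {A : sigma_alg} (a b : A) : Prop := rst A (rst A a b) b = a.

(* 0 := a |> a ; we write the zero test for d as d = d |> d *)
Definition is_zero {A : sigma_alg} (d : A) : Prop := d = rst A d d.

Definition is_atom {A : sigma_alg} (c : A) : Prop :=
  ~ is_zero c /\ forall d : A, ale d c -> is_zero d \/ d = c.

Definition atoms_separating (A : sigma_alg) : Prop :=
  forall a b : A, ~ ale a b ->
    exists c : A, is_atom c /\ ale c a /\ ~ ale c b.

Definition is_glb {A : sigma_alg} (S : A -> Prop) (m : A) : Prop :=
  (forall s, S s -> ale m s) /\
  (forall l, (forall s, S s -> ale l s) -> ale l m).

Definition meet_complete (A : sigma_alg) (X : Type) (theta : A -> pfun X) : Prop :=
  forall (S : A -> Prop) (m : A), (exists s, S s) -> is_glb S m ->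
    forall x y, theta m x = Some y <-> (forall s, S s -> theta s x = Some y).

Definition has_meet_complete_rep (A : sigma_alg) : Prop :=
  exists (X : Type) (theta : A -> pfun X), is_rep A X theta /\ meet_complete A X theta.

From Stdlib Require Import Classical ClassicalEpsilon.

(* Fix a representation theta of A on X.  Then a <= b means theta(a) is
   contained in theta(b), zero is the empty function, and for an atom c
   the domain D_c of theta(c) is either contained in or disjoint from the
   domain of any theta(a): otherwise c <| a would be a proper nonzero part
   of c.

   (=>) Given a point (x,y) of theta(a) outside theta(b), consider
   S = {t <= a | theta(t)(x) = y}.  A lower bound of S undefined at x is 0,
   and one defined at x is an atom below a but not below b.  If no such atom
   exists, S has meet 0, and meet-completeness puts (x,y) into theta(0).

   (<=) Represent A on its own atoms: theta'(a)(c) = c <| a whenever c is an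
   atom with D_c inside dom theta(a).  Since c <| a records theta(a) on D_c,
   theta'(a)(c) depends only on theta(a) restricted to D_c.  The operations
   |>, upd and join act pointwise by choosing an argument according to which
   arguments are defined; such "selective" operations are preserved by
   theta'.  Meets of arbitrary sets are preserved (meet-completeness), which
   covers the binary meet.  Injectivity is exactly atom separation. *)

Definition dres {A : sigma_alg} (a b : A) : A := rst A (rst A a b) b.

Definition pf_sub {X} (f g : pfun X) : Prop :=
  forall x y, f x = Some y -> g x = Some y.

Definition is_def {T} (o : option T) : bool :=
  match o with Some _ => true | None => false end.

(* A selective binary operation on partial functions returns, at each point,
   the left value, the right value or nothing, chosen only from which of the
   two values are defined. *)
Inductive selection := TakeLeft | TakeRight | TakeNone.

Definition select {T} (s : bool -> bool -> selection) (u v : option T) : option T :=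
  match s (is_def u) (is_def v) with
  | TakeLeft => u
  | TakeRight => v
  | TakeNone => None
  end.

Definition rst_sel (du dv : bool) : selection := if du then TakeNone else TakeRight.
Definition upd_sel (du dv : bool) : selection :=
  if du then (if dv then TakeRight else TakeLeft) else TakeNone.
Definition join_sel (du dv : bool) : selection := if du then TakeLeft else TakeRight.

Lemma pf_rst_select {X} (f g : pfun X) x : pf_rst f g x = select rst_sel (f x) (g x).
Proof. unfold pf_rst, select, rst_sel. destruct (f x), (g x); reflexivity. Qed.

Lemma pf_upd_select {X} (f g : pfun X) x : pf_upd f g x = select upd_sel (f x) (g x).
Proof. unfold pf_upd, select, upd_sel. destruct (f x), (g x); reflexivity. Qed.

Lemma pf_join_select {X} (f g : pfun X) x : pf_join f g x = select join_sel (f x) (g x).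
Proof. unfold pf_join, select, join_sel. destruct (f x), (g x); reflexivity. Qed.

Lemma select_none {T} s : @select T s None None = None.
Proof. unfold select; simpl. destruct (s false false); reflexivity. Qed.

Lemma option_not_none {T} (o : option T) : o <> None -> exists y, o = Some y.
Proof. destruct o; [eauto | congruence]. Qed.

Section Representation.

Variables (A : sigma_alg) (X : Type) (theta : A -> pfun X).
Hypothesis Hrep : is_rep A X theta.
Implicit Types a b c d e l s : A.

Lemma rep_inj a b : pf_eq (theta a) (theta b) -> a = b.
Proof. exact (proj1 Hrep a b). Qed.

Lemma rep_rst a b x : theta (rst A a b) x = pf_rst (theta a) (theta b) x.
Proof. exact (proj1 (proj2 Hrep) a b x). Qed.

Lemma rep_rst_undef a b x : theta a x = None -> theta (rst A a b) x = theta b x.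
Proof. intro Ha. rewrite rep_rst. unfold pf_rst. rewrite Ha. reflexivity. Qed.

Lemma rep_rst_def a b x w :
  theta (rst A a b) x = Some w -> theta a x = None /\ theta b x = Some w.
Proof. rewrite rep_rst. unfold pf_rst. destruct (theta a x); [discriminate | auto]. Qed.

Lemma rep_dres c a x :
  theta (dres c a) x = match theta c x with Some _ => theta a x | None => None end.
Proof.
  unfold dres. rewrite !rep_rst. unfold pf_rst. rewrite rep_rst. unfold pf_rst.
  destruct (theta c x); [reflexivity | destruct (theta a x); reflexivity].
Qed.

Lemma rep_dres_on c a x : theta c x <> None -> theta (dres c a) x = theta a x.
Proof. intro Hc. rewrite rep_dres. destruct (theta c x); congruence. Qed.

Lemma ale_of_sub a b : pf_sub (theta a) (theta b) -> ale a b.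
Proof.
  intro Hs. apply rep_inj. intro x. change (theta (dres a b) x = theta a x).
  rewrite rep_dres. destruct (theta a x) eqn:E; [apply Hs, E | reflexivity].
Qed.

Lemma sub_of_ale a b : ale a b -> pf_sub (theta a) (theta b).
Proof.
  intros E x y Ha. rewrite <- E in Ha. change (theta (dres a b) x = Some y) in Ha.
  rewrite rep_dres in Ha. destruct (theta a x); [exact Ha | discriminate].
Qed.

Lemma ale_refl a : ale a a.
Proof. apply ale_of_sub. intros x y Hxy. exact Hxy. Qed.

Lemma ale_antisym a b : ale a b -> ale b a -> a = b.
Proof.
  intros Hab Hba. apply rep_inj. intro x.
  destruct (theta a x) as [p|] eqn:Ea.
  - symmetry. apply (sub_of_ale _ _ Hab _ _ Ea).
  - destruct (theta b x) as [q|] eqn:Eb; [|reflexivity].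
    rewrite <- Ea. apply (sub_of_ale _ _ Hba _ _ Eb).
Qed.

Lemma dres_ale c a : ale (dres c a) a.
Proof.
  apply ale_of_sub. intros x y. rewrite rep_dres.
  destruct (theta c x); [auto | discriminate].
Qed.

Lemma rep_rst_self d x : theta (rst A d d) x = None.
Proof. rewrite rep_rst. unfold pf_rst. destruct (theta d x); reflexivity. Qed.

Lemma zero_iff_empty d : is_zero d <-> forall x, theta d x = None.
Proof.
  split.
  - intros E x. rewrite E. apply rep_rst_self.
  - intro Hd. apply rep_inj. intro x. rewrite rep_rst_self. apply Hd.
Qed.

Lemma zero_below_own_rst d e l :
  pf_sub (theta d) (theta l) -> ale l (rst A d e) -> is_zero d.
Proof.
  intros Hdl Hl. apply zero_iff_empty. intro x.
  destruct (theta d x) as [w|] eqn:Ed; [|reflexivity].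
  destruct (rep_rst_def d e x w (sub_of_ale l _ Hl x w (Hdl x w Ed))) as [Hn _].
  congruence.
Qed.

Lemma rst_ale d e : ale (rst A d e) e.
Proof. apply ale_of_sub. intros x w Hw. exact (proj2 (rep_rst_def d e x w Hw)). Qed.

Definition through (a : A) (x y : X) (t : A) : Prop := ale t a /\ theta t x = Some y.

Definition lower_bound (S : A -> Prop) (l : A) : Prop := forall s, S s -> ale l s.

Lemma lower_bound_undef a x y l : theta a x = Some y ->
  lower_bound (through a x y) l -> theta l x = None -> is_zero l.
Proof.
  intros Ha Hl Hlx. apply (zero_below_own_rst l a l); [apply sub_of_ale, ale_refl |].
  apply Hl. split; [apply rst_ale | rewrite rep_rst_undef; assumption].
Qed.

Lemma lower_bound_def a x y l z : theta a x = Some y ->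
  lower_bound (through a x y) l -> theta l x = Some z ->
  is_atom l /\ ale l a /\ theta l x = Some y.
Proof.
  intros Ha Hl Hlx.
  assert (Hla : ale l a) by (apply Hl; split; [apply ale_refl | exact Ha]).
  pose proof (sub_of_ale l a Hla) as Hsub.
  assert (Hly : theta l x = Some y) by (rewrite (Hsub x z Hlx) in Ha; congruence).
  split; [split | split; assumption].
  - intro Hz. apply zero_iff_empty with (x := x) in Hz. congruence.
  - intros d Hd. pose proof (sub_of_ale d l Hd) as Hdl.
    destruct (theta d x) as [w|] eqn:Edx.
    + right. apply ale_antisym; [exact Hd | apply Hl]. split.
      * apply ale_of_sub. intros x' w' Hw'. apply Hsub, Hdl, Hw'.
      * rewrite (Hdl x w Edx) in Hly. congruence.
    + left. apply (zero_below_own_rst d l l Hdl). apply Hl. split.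
      * apply ale_of_sub. intros x' w' Hw'. apply Hsub. exact (proj2 (rep_rst_def _ _ _ _ Hw')).
      * rewrite rep_rst_undef; assumption.
Qed.

(* Meet-completeness forces the atoms to be separating: if no atom below a
   avoids b, the points of a outside b would lie in theta(0). *)
Theorem separating_of_meet_complete : meet_complete A X theta -> atoms_separating A.
Proof.
  intros Hmc a b Hab.
  assert (exists x y, theta a x = Some y /\ theta b x <> Some y) as [x [y [Ha Hb]]].
  { apply NNPP. intro Hn. apply Hab, ale_of_sub. intros x y Hx.
    apply NNPP. intro Hy. apply Hn. eauto. }
  apply NNPP. intro Hno.
  assert (Hzero : forall l, lower_bound (through a x y) l -> is_zero l).
  { intros l Hl. destruct (theta l x) as [z|] eqn:Elx.
    - destruct (lower_bound_def a x y l z Ha Hl Elx) as [Hat [Hla Hly]].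
      exfalso. apply Hno. exists l. split; [assumption | split; [assumption |]].
      intro Hlb. exact (Hb (sub_of_ale l b Hlb x y Hly)).
    - exact (lower_bound_undef a x y l Ha Hl Elx). }
  pose proof (rep_rst_self a) as Hempty.
  assert (Hglb : is_glb (through a x y) (rst A a a)).
  { split.
    - intros s _. apply ale_of_sub. intros z w. rewrite Hempty. discriminate.
    - intros l Hl. apply ale_of_sub. intros z w.
      rewrite (proj1 (zero_iff_empty l) (Hzero l Hl)). discriminate. }
  assert (Hthrough : through a x y a) by (split; [apply ale_refl | exact Ha]).
  pose proof (proj2 (Hmc _ _ (ex_intro _ a Hthrough) Hglb x y) (fun s Hs => proj2 Hs)) as Hxy.
  rewrite Hempty in Hxy. discriminate.
Qed.

Definition overlaps (c a : A) : Prop :=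
  exists x, theta c x <> None /\ theta a x <> None.

Lemma atom_nonempty c : is_atom c -> exists x, theta c x <> None.
Proof.
  intros [Hnz _]. apply NNPP. intro Hno. apply Hnz. apply zero_iff_empty. intro x.
  destruct (theta c x) eqn:E; [|reflexivity].
  exfalso. apply Hno. exists x. rewrite E. discriminate.
Qed.

Lemma disjoint_of_not_overlaps c a x :
  ~ overlaps c a -> theta c x <> None -> theta a x = None.
Proof. intros Hn Hc. apply NNPP. intro Ha. apply Hn. exists x. auto. Qed.

(* An atom's domain lies entirely inside any domain it meets: otherwise
   c <| a is a nonzero part of c different from c. *)
Lemma atom_inside c a x :
  is_atom c -> overlaps c a -> theta c x <> None -> theta a x <> None.
Proof.
  intros [_ Hmin] [x0 [Hc0 Ha0]] Hc Ha.
  assert (Hle : ale (dres a c) c).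
  { apply ale_of_sub. intros z y. rewrite rep_dres. destruct (theta a z); [auto | discriminate]. }
  destruct (Hmin _ Hle) as [Hzero | Heq].
  - apply Ha0. apply zero_iff_empty with (x := x0) in Hzero.
    rewrite rep_dres in Hzero. destruct (theta a x0); [contradiction | reflexivity].
  - apply Hc. rewrite <- Heq, rep_dres, Ha. reflexivity.
Qed.

Lemma rep_meet_glb m : omeet A = Some m -> forall a b : A,
  is_glb (fun s => s = a \/ s = b) (m a b).
Proof.
  intros Hm a b. pose proof (proj1 (proj2 (proj2 Hrep)) m Hm a b) as Hmeet.
  split.
  - intros s [-> | ->]; apply ale_of_sub; intros x y Hxy; apply Hmeet in Hxy; tauto.
  - intros l Hl. apply ale_of_sub. intros x y Hxy. apply Hmeet.
    split; apply (sub_of_ale l); auto.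
Qed.

(* The representation of A on its atoms: theta' a c = c <| a when c is an
   atom whose domain meets (hence, by [atom_inside], lies inside) that of
   theta a, undefined otherwise. *)
Definition atom_rep (a : A) : pfun A := fun c =>
  if excluded_middle_informative (is_atom c /\ overlaps c a)
  then Some (dres c a) else None.

Lemma atom_rep_overlaps c a : is_atom c -> overlaps c a -> atom_rep a c = Some (dres c a).
Proof.
  intros Hc Ho. unfold atom_rep.
  destruct (excluded_middle_informative _) as [_ | Hn]; [reflexivity | tauto].
Qed.

Lemma atom_rep_undef c a : ~ (is_atom c /\ overlaps c a) -> atom_rep a c = None.
Proof.
  intro Hn. unfold atom_rep.
  destruct (excluded_middle_informative _); [contradiction | reflexivity].
Qed.

Lemma atom_rep_def c a y :
  atom_rep a c = Some y -> is_atom c /\ overlaps c a /\ y = dres c a.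
Proof.
  unfold atom_rep. destruct (excluded_middle_informative _) as [[Hc Ho] | _];
    intro E; [injection E; intros <-; auto | discriminate].
Qed.

Lemma atom_rep_local c d e : is_atom c ->
  (forall x, theta c x <> None -> theta d x = theta e x) -> atom_rep d c = atom_rep e c.
Proof.
  intros Hc Hde.
  assert (Hov : overlaps c d <-> overlaps c e).
  { split; intros [x [Hcx Hx]]; exists x; [rewrite <- Hde | rewrite Hde]; auto. }
  destruct (classic (overlaps c e)) as [Ho | Hno].
  - rewrite (atom_rep_overlaps c d Hc (proj2 Hov Ho)), (atom_rep_overlaps c e Hc Ho).
    f_equal. apply rep_inj. intro x. rewrite !rep_dres.
    destruct (theta c x) eqn:E; [apply Hde; congruence | reflexivity].
  - rewrite !atom_rep_undef; tauto.
Qed.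

Lemma atom_rep_empty c d :
  (forall x, theta c x <> None -> theta d x = None) -> atom_rep d c = None.
Proof. intro Hd. apply atom_rep_undef. intros [_ [x [Hc Hx]]]. exact (Hx (Hd x Hc)). Qed.

Lemma atom_rep_is_def c a x : is_atom c -> theta c x <> None ->
  is_def (theta a x) = is_def (atom_rep a c).
Proof.
  intros Hc Hx. destruct (classic (overlaps c a)) as [Ho | Hno].
  - rewrite (atom_rep_overlaps c a Hc Ho).
    destruct (option_not_none _ (atom_inside c a x Hc Ho Hx)) as [y ->]. reflexivity.
  - rewrite (disjoint_of_not_overlaps c a x Hno Hx), atom_rep_undef; tauto.
Qed.

Lemma atom_rep_select (op : A -> A -> A) (s : bool -> bool -> selection) :
  (forall a b x, theta (op a b) x = select s (theta a x) (theta b x)) ->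
  forall a b c, atom_rep (op a b) c = select s (atom_rep a c) (atom_rep b c).
Proof.
  intros Hop a b c. destruct (classic (is_atom c)) as [Hc | Hnc].
  2: { rewrite !atom_rep_undef by tauto. symmetry. apply select_none. }
  assert (Hsel : forall x, theta c x <> None ->
    theta (op a b) x = match s (is_def (atom_rep a c)) (is_def (atom_rep b c)) with
                       | TakeLeft => theta a x | TakeRight => theta b x
                       | TakeNone => None end).
  { intros x Hx. rewrite Hop. unfold select.
    rewrite (atom_rep_is_def c a x Hc Hx), (atom_rep_is_def c b x Hc Hx). reflexivity. }
  unfold select.
  destruct (s (is_def (atom_rep a c)) (is_def (atom_rep b c))).
  - apply atom_rep_local; assumption.
  - apply atom_rep_local; assumption.
  - apply atom_rep_empty; assumption.
Qed.

Lemma atom_rep_meet_complete : meet_complete A A atom_rep.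
Proof.
  intros S m [s0 Hs0] [Hlow Hgreat] c y. split.
  - intros Hm s Hs. destruct (atom_rep_def c m y Hm) as [Hc [Ho _]].
    rewrite <- Hm. apply atom_rep_local; [assumption |]. intros x Hx.
    destruct (option_not_none _ (atom_inside c m x Hc Ho Hx)) as [z Hz].
    rewrite Hz. apply (sub_of_ale m s (Hlow s Hs)), Hz.
  - intro Hall. destruct (atom_rep_def c s0 y (Hall s0 Hs0)) as [Hc [Ho Hy]].
    assert (Hym : ale y m).
    { apply Hgreat. intros s Hs. destruct (atom_rep_def c s y (Hall s Hs)) as [_ [_ ->]].
      apply dres_ale. }
    rewrite <- (Hall s0 Hs0). apply atom_rep_local; [assumption |]. intros x Hx.
    destruct (option_not_none _ (atom_inside c s0 x Hc Ho Hx)) as [z Hz].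
    rewrite Hz. apply (sub_of_ale y m Hym). rewrite Hy, rep_dres_on; assumption.
Qed.

Lemma atom_rep_reflects_ale : atoms_separating A ->
  forall a b, (forall c, atom_rep a c = atom_rep b c) -> ale a b.
Proof.
  intros Hsep a b Hab. apply NNPP. intro Hn.
  destruct (Hsep a b Hn) as [c [Hc [Hca Hcb]]].
  destruct (atom_nonempty c Hc) as [x Hx].
  assert (Ho : overlaps c a).
  { exists x. split; [assumption |].
    destruct (option_not_none _ Hx) as [z Hz]. rewrite (sub_of_ale c a Hca x z Hz). discriminate. }
  pose proof (atom_rep_overlaps c a Hc Ho) as Ha. rewrite Hab in Ha.
  destruct (atom_rep_def c b _ Ha) as [_ [_ Hdres]].
  apply Hcb. unfold ale. fold (dres c b). rewrite <- Hdres. exact Hca.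
Qed.

Theorem atom_rep_is_rep : atoms_separating A -> is_rep A A atom_rep.
Proof.
  intro Hsep. destruct Hrep as (_ & _ & _ & Hupd & Hjoin).
  split; [| split; [| split; [| split]]].
  - intros a b Hab. apply ale_antisym; apply (atom_rep_reflects_ale Hsep);
      intro c; [| symmetry]; apply Hab.
  - intros a b c. rewrite pf_rst_select. apply (atom_rep_select _ rst_sel).
    intros a' b' x. rewrite rep_rst. apply pf_rst_select.
  - intros m Hm a b c y.
    rewrite (atom_rep_meet_complete (fun s => s = a \/ s = b) (m a b)
               (ex_intro _ a (or_introl eq_refl)) (rep_meet_glb m Hm a b) c y).
    split; [intro Hab; split; apply Hab; auto | intros [Ha Hb] s [-> | ->]; assumption].
  - intros u Hu a b c. rewrite pf_upd_select. apply (atom_rep_select _ upd_sel).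
    intros a' b' x. rewrite (Hupd u Hu). apply pf_upd_select.
  - intros j Hj a b c. rewrite pf_join_select. apply (atom_rep_select _ join_sel).
    intros a' b' x. rewrite (Hjoin j Hj). apply pf_join_select.
Qed.

End Representation.

Theorem corollary6p3 (A : sigma_alg) :
  has_meet_complete_rep A <-> (representable A /\ atoms_separating A).
Proof.
  split.
  - intros [X [theta [Hrep Hmc]]]. split.
    + exists X, theta. exact Hrep.
    + exact (separating_of_meet_complete A X theta Hrep Hmc).
  - intros [[X [theta Hrep]] Hsep]. exists A, (atom_rep A X theta).
    split; [apply atom_rep_is_rep | apply atom_rep_meet_complete]; assumption.
Qed.
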